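(* Let $\mathcal{X}$ be a finite-dimensional complex Hilbert space and let $\mathcal{Y}$ be an isometric copy of $\mathcal{X}$. For $\mathcal{P},\mathcal{Q}\in\mathcal{D}(\mathcal{X})$ define $$\mathrm{qW}(\mathcal{P},\mathcal{Q}) := \min_{\pi} \operatorname{Tr}(\pi C)\quad\text{s.t. } \operatorname{Tr}_{\mathcal{Y}}(\pi)=\mathcal{P},\ \operatorname{Tr}_{\mathcal{X}}(\pi)=\mathcal{Q},\ \pi\in\mathcal{D}(\mathcal{X}\otimes\mathcal{Y}),$$ where $C=\frac{1}{2}(\mathrm{I}_{\mathcal{X}\otimes\mathcal{Y}}-\mathrm{SWAP})$. Then $\mathrm{qW}(\cdot,\cdot)$ is a semimetric on $\mathcal{D}(\mathcal{X})$, i.e., for all $\mathcal{P},\mathcal{Q}\in\mathcal{D}(\mathcal{X})$: (1) $\mathrm{qW}(\mathcal{P},\mathcal{Q})\ge 0$; (2) $\mathrm{qW}(\mathcal{P},\mathcal{Q})=\mathrm{qW}(\mathcal{Q},\mathcal{P})$; (3) $\mathrm{qW}(\mathcal{P},\mathcal{Q})=0$ if and only if $\mathcal{P}=\mathcal{Q}$.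
   Context: $\mathcal{D}(\mathcal{Z})$ denotes the set of density operators on a finite-dimensional complex Hilbert space $\mathcal{Z}$, i.e. positive semidefinite operators of trace one. $\operatorname{Tr}_{\mathcal{Y}}$ and $\operatorname{Tr}_{\mathcal{X}}$ denote the partial traces over $\mathcal{Y}$ and $\mathcal{X}$ respectively. Identifying $\mathcal{Y}$ with $\mathcal{X}$, $\mathrm{SWAP}$ is the linear operator on $\mathcal{X}\otimes\mathcal{Y}$ with $\mathrm{SWAP}(x\otimes y)=y\otimes x$ for all $x\in\mathcal{X},y\in\mathcal{Y}$, and $\mathrm{I}_{\mathcal{X}\otimes\mathcal{Y}}$ is the identity. *)

From HB Require Import structures.
From mathcomp Require Import all_boot all_order all_algebra.
From mathcomp Require Import complex.
From mathcomp Require Import classical_sets reals.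
Set Implicit Arguments. Unset Strict Implicit. Unset Printing Implicit Defensive.
Import Order.TTheory GRing.Theory Num.Theory.
Local Open Scope ring_scope.
Local Open Scope classical_set_scope.

Section QW.
Variables (R : realType) (n : nat).
Local Notation C := (complex R).

Definition adjmx m p (A : 'M[C]_(m, p)) : 'M[C]_(p, m) := (map_mx Num.conj A)^T.

Definition is_density m (A : 'M[C]_m) : Prop :=
  adjmx A = A /\
  (forall v : 'cV[C]_m, 0 <= (adjmx v *m A *m v) 0 0) /\
  \tr A = 1.

(* X (x) Y with X = Y = C^n; basis vector e_i (x) e_j has index mxvec_index i j *)
Definition ptrY (pi : 'M[C]_(n * n)) : 'M[C]_n :=
  \matrix_(i, j) \sum_(k < n) pi (mxvec_index i k) (mxvec_index j k).
Definition ptrX (pi : 'M[C]_(n * n)) : 'M[C]_n :=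
  \matrix_(i, j) \sum_(k < n) pi (mxvec_index k i) (mxvec_index k j).

Definition SWAP : 'M[C]_(n * n) :=
  \sum_(i < n) \sum_(j < n) delta_mx (mxvec_index j i) (mxvec_index i j).

Definition costC : 'M[C]_(n * n) := 2^-1 *: (1%:M - SWAP).

Definition couplings (P Q : 'M[C]_n) : set 'M[C]_(n * n) :=
  [set pi | is_density pi /\ ptrY pi = P /\ ptrX pi = Q].

(* Tr(pi C) is real for Hermitian pi; qW is the optimal value (the minimum is
   attained since the feasible set is compact and nonempty; we take the inf). *)
Definition qW (P Q : 'M[C]_n) : R :=
  inf [set complex.Re (\tr (pi *m costC)) | pi in couplings P Q].

End QW.

(* The cost operator C = (I - SWAP)/2 equals 1/4 of the sum of the projectors
   onto the antisymmetric vectors e_i (x) e_j - e_j (x) e_i, so Tr(pi C) >= 0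
   and every <v, pi v> with v antisymmetric is at most 4 Tr(pi C).
   Conjugating a coupling by SWAP exchanges its marginals and keeps its cost:
   this gives symmetry. If P = sum_m d_m w_m w_m^* is a spectral decomposition,
   sum_m d_m (w_m (x) w_m)(w_m (x) w_m)^* couples P with itself and lives on the
   symmetric subspace, so it has cost 0; P (x) Q shows that couplings exist.
   Conversely (P - Q)_ab = sum_k [pi(ak,bk) - pi(ka,kb)] is a sum of matrix
   elements of pi against antisymmetric vectors, so Cauchy-Schwarz bounds it by
   O(n sqrt(Tr(pi C))); couplings of arbitrarily small cost then force P = Q. *)

From HB Require Import structures.
From mathcomp Require Import all_boot all_order all_algebra.
From mathcomp Require Import complex.
From mathcomp Require Import classical_sets reals.
From mathcomp Require Import ring lra.
Import Order.TTheory GRing.Theory Num.Theory.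
Local Open Scope ring_scope.
Set Implicit Arguments. Unset Strict Implicit. Unset Printing Implicit Defensive.

Lemma ler_term_sum (R : numDomainType) (I : finType) (F : I -> R) x :
  (forall y, 0 <= F y) -> F x <= \sum_y F y.
Proof. by move=> F_ge0; rewrite (bigD1 x) //= lerDl sumr_ge0. Qed.

Lemma mxtrace_mul_delta (R : comPzRingType) k (A : 'M[R]_k) i j :
  \tr (A *m delta_mx i j) = A j i.
Proof.
rewrite -(mul_delta_mx (0 : 'I_1)) mulmxA mxtrace_mulC mulmxA trace_mx11.
by rewrite -rowE -colE !mxE.
Qed.

Lemma le0_of_le_linear (R : realFieldType) (x K : R) :
  0 <= K -> (forall eta, 0 < eta <= 1 -> x <= K * eta) -> x <= 0.
Proof.
move=> K_ge0 x_le; apply/ler_addgt0Pr => e e_gt0; rewrite add0r.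
have [K_le_e|e_lt_K] := leP K e.
  by apply: le_trans (x_le 1 _) _; rewrite ?mulr1 ?ltr01 ?lexx.
have K_gt0 : 0 < K := lt_trans e_gt0 e_lt_K.
apply: le_trans (x_le (e / K) _) _; last by rewrite mulrC divfK ?gt_eqF.
by rewrite divr_gt0 //= ler_pdivrMr // mul1r ltW.
Qed.

Lemma complex_eq0_of_Re_ge0 (R : rcfType) (z : complex R) :
  (forall l, l * Num.conj l = 1 -> 0 <= complex.Re (l * z)) -> z = 0.
Proof.
case: z => a b z_ge0.
move: (z_ge0 1) (z_ge0 (-1)) (z_ge0 'i%C) (z_ge0 (- 'i%C)).
simpc => /(_ erefl) /= ha /(_ erefl) /= hNa /(_ erefl) /= hNb /(_ erefl) /= hb.
have a0 : a = 0 by apply/le_anti; rewrite ha -oppr_ge0 hNa.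
have b0 : b = 0 by apply/le_anti; rewrite hb -oppr_ge0 hNb.
by rewrite a0 b0.
Qed.

Section HermitianForms.
Variable R : realType.
Local Notation C := (complex R).
Local Notation Re := (@complex.Re R).

Lemma adjmxE m p (A : 'M[C]_(m, p)) i j : adjmx A i j = Num.conj (A j i).
Proof. by rewrite !mxE. Qed.

Lemma adjmxK m p (A : 'M[C]_(m, p)) : adjmx (adjmx A) = A.
Proof. by apply/matrixP => i j; rewrite !adjmxE conjCK. Qed.

Lemma adjmxD m p (A B : 'M[C]_(m, p)) : adjmx (A + B) = adjmx A + adjmx B.
Proof. by rewrite /adjmx map_mxD linearD. Qed.

Lemma adjmxN m p (A : 'M[C]_(m, p)) : adjmx (- A) = - adjmx A.
Proof. by rewrite /adjmx map_mxN linearN. Qed.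

Lemma adjmxZ m p a (A : 'M[C]_(m, p)) : adjmx (a *: A) = Num.conj a *: adjmx A.
Proof. by rewrite /adjmx map_mxZ linearZ. Qed.

Lemma adjmxM m p q (A : 'M[C]_(m, p)) (B : 'M[C]_(p, q)) :
  adjmx (A *m B) = adjmx B *m adjmx A.
Proof. by rewrite /adjmx map_mxM trmx_mul. Qed.

Lemma adjmx_delta m p (i : 'I_m) (j : 'I_p) :
  adjmx (delta_mx i j : 'M[C]_(m, p)) = delta_mx j i.
Proof. by rewrite /adjmx map_delta_mx trmx_delta. Qed.

Definition mxform k (M : 'M[C]_k) (u w : 'cV[C]_k) : C := (adjmx u *m M *m w) 0 0.

Definition psdmx k (M : 'M[C]_k) := forall v, 0 <= mxform M v v.

Section Form.
Variables (k : nat) (M : 'M[C]_k).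

Lemma mxform_delta i j : mxform M (delta_mx i 0) (delta_mx j 0) = M i j.
Proof. by rewrite /mxform adjmx_delta -rowE -colE !mxE. Qed.

Lemma mxformDl u1 u2 w : mxform M (u1 + u2) w = mxform M u1 w + mxform M u2 w.
Proof. by rewrite /mxform adjmxD !mulmxDl mxE. Qed.

Lemma mxformBl u1 u2 w : mxform M (u1 - u2) w = mxform M u1 w - mxform M u2 w.
Proof. by rewrite /mxform adjmxD adjmxN !mulmxDl !mulNmx !mxE. Qed.

Lemma mxformDr u w1 w2 : mxform M u (w1 + w2) = mxform M u w1 + mxform M u w2.
Proof. by rewrite /mxform !mulmxDr mxE. Qed.

Lemma mxformBr u w1 w2 : mxform M u (w1 - w2) = mxform M u w1 - mxform M u w2.
Proof. by rewrite /mxform !mulmxBr !mxE. Qed.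

Lemma mxformZl a u w : mxform M (a *: u) w = Num.conj a * mxform M u w.
Proof. by rewrite /mxform adjmxZ -!scalemxAl mxE. Qed.

Lemma mxformZr a u w : mxform M u (a *: w) = a * mxform M u w.
Proof. by rewrite /mxform -!scalemxAr mxE. Qed.

Lemma mxform_sum u w :
  mxform M u w = \sum_x \sum_y Num.conj (u x 0) * M x y * w y 0.
Proof.
rewrite /mxform mxE; under eq_bigr do rewrite mxE mulr_suml.
rewrite exchange_big /=; apply: eq_bigr => x _; apply: eq_bigr => y _.
by rewrite adjmxE.
Qed.

Lemma mxform_adj u w : adjmx M = M -> mxform M w u = Num.conj (mxform M u w).
Proof. by move=> herm; rewrite /mxform -adjmxE !adjmxM adjmxK herm mulmxA. Qed.

(* Expand [0 <= <s u + l t w, M (s u + l t w)>], using [|l| = 1]. *)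
Lemma psdmx_cauchy_schwarz u w (s t : R) (l : C) :
  adjmx M = M -> psdmx M -> l * Num.conj l = 1 ->
  - (2 * s * t * Re (l * mxform M u w)) <=
    s ^+ 2 * Re (mxform M u u) + t ^+ 2 * Re (mxform M w w).
Proof.
move=> herm psd l_unit.
have := psd (s%:C%C *: u + (l * t%:C%C) *: w).
rewrite mxformDl !mxformDr !mxformZl !mxformZr (mxform_adj u w herm) lecE.
move=> /andP[_]; move: l_unit.
case: l (mxform M u u) (mxform M u w) (mxform M w w) => l1 l2 [a1 a2] [b1 b2] [c1 c2] /=.
move=> /(congr1 Re) /= l_unit.
rewrite !(mul0r, mulr0, subr0, addr0, add0r, sub0r, oppr0, opprK, mulrN) in l_unit *.
have c1E : t ^+ 2 * c1 = t ^+ 2 * c1 * (l1 * l1 + l2 * l2) by rewrite l_unit mulr1.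
lra.
Qed.

Lemma psdmx_Re_form_ge u w (l : C) (a b : R) :
  adjmx M = M -> psdmx M -> l * Num.conj l = 1 -> 0 < a -> 0 < b ->
  Re (mxform M u u) <= a ^+ 2 -> Re (mxform M w w) <= b ^+ 2 ->
  - Re (l * mxform M u w) <= a * b.
Proof.
move=> herm psd l_unit a_gt0 b_gt0 hu hw.
have := psdmx_cauchy_schwarz u w b a herm psd l_unit.
have := ler_wpM2l (exprn_ge0 2 (ltW b_gt0)) hu.
have := ler_wpM2l (exprn_ge0 2 (ltW a_gt0)) hw.
have ab_gt0 : 0 < 2 * a * b by rewrite !mulr_gt0.
by move=> *; rewrite -(ler_pM2l ab_gt0); lra.
Qed.

End Form.

Lemma psdmx_Re_ge0 k (M : 'M[C]_k) v : psdmx M -> 0 <= Re (mxform M v v).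
Proof. by move/(_ v); rewrite lecE => /andP[]. Qed.

Lemma density_diag_le1 k (pi : 'M[C]_k) x : is_density pi -> Re (pi x x) <= 1.
Proof.
move=> [_ [psd tr1]]; rewrite -[1]/(Re 1) -tr1 /mxtrace raddf_sum.
by apply: ler_term_sum => y; rewrite -mxform_delta; apply: psdmx_Re_ge0.
Qed.

Definition gram k (I : finType) (c : I -> C) (z : I -> 'cV[C]_k) : 'M[C]_k :=
  \sum_r c r *: (z r *m adjmx (z r)).

Section Gram.
Variables (k : nat) (I : finType) (c : I -> C) (z : I -> 'cV[C]_k).

Lemma gramE x y : gram c z x y = \sum_r c r * (z r x 0 * Num.conj (z r y 0)).
Proof.
rewrite /gram summxE; apply: eq_bigr => r _.
by rewrite !mxE big_ord1 adjmxE.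
Qed.

Hypothesis c_ge0 : forall r, 0 <= c r.

Lemma gram_adj : adjmx (gram c z) = gram c z.
Proof.
apply/matrixP => x y; rewrite adjmxE !gramE rmorph_sum.
by apply: eq_bigr => r _; rewrite !rmorphM /= conjCK geC0_conj //; ring.
Qed.

Lemma gram_psd : psdmx (gram c z).
Proof.
move=> v; rewrite /mxform /gram mulmx_sumr mulmx_suml summxE.
apply: sumr_ge0 => r _; rewrite -scalemxAr -scalemxAl mxE mulr_ge0 //.
have -> : adjmx v *m (z r *m adjmx (z r)) *m v =
    (adjmx v *m z r) *m adjmx (adjmx v *m z r) by rewrite adjmxM adjmxK !mulmxA.
by rewrite mxE big_ord1 adjmxE mul_conjC_ge0.
Qed.

End Gram.

Local Open Scope sesquilinear_scope.

Lemma herm_psd_gram k (M : 'M[C]_k) : adjmx M = M -> psdmx M ->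
  exists d : 'I_k -> C, exists w : 'I_k -> 'cV[C]_k,
  [/\ forall m, 0 <= d m, M = gram d w & forall m, \sum_i w m i 0 * Num.conj (w m i 0) = 1].
Proof.
move=> herm psd.
have adj_tC m p (A : 'M[C]_(m, p)) : adjmx A = A ^t* by rewrite /adjmx map_trmx.
have /hermitian_normalmx/orthomx_spectralP : M \is hermsymmx.
  by apply/is_hermitianmxP; rewrite expr0 scale1r -adj_tC herm.
set U := spectralmx M; set sp := spectral_diag M; set D := diag_mx sp.
have U_unitary : U \is unitarymx := spectral_unitarymx M.
rewrite invmx_unitary // -adj_tC => defM.
have UUt : U *m adjmx U = 1%:M by rewrite adj_tC; apply/unitarymxP.
exists (fun m => sp 0 m), (fun m => adjmx (row m U)); split.
- move=> m; have rowU : row m U *m adjmx U = delta_mx 0 m.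
    by rewrite -row_mul UUt rowE mulmx1.
  have := psd (adjmx (row m U)); rewrite /mxform adjmxK defM.
  have -> : row m U *m (adjmx U *m D *m U) *m adjmx (row m U) =
      delta_mx 0 m *m D *m adjmx (delta_mx 0 m) by rewrite -rowU adjmxM adjmxK !mulmxA.
  by rewrite adjmx_delta -rowE -colE !mxE eqxx mulr1n.
- apply/matrixP => i j; rewrite gramE {1}defM mul_mx_diag !mxE.
  by apply: eq_bigr => m _; rewrite !mxE conjCK; ring.
- move=> m; move/matrixP: UUt => /(_ m m); rewrite !mxE eqxx mulr1n => <-.
  by apply: eq_bigr => i _; rewrite !mxE conjCK mulrC.
Qed.

End HermitianForms.

Section QuantumWasserstein.
Variables (R : realType) (n : nat).
Local Notation C := (complex R).
Local Notation Re := (@complex.Re R).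
Local Notation N := (n * n)%N.
Local Notation mv := (@mxvec_index n n).
Local Notation e x := (delta_mx x 0 : 'cV[C]_N).
Local Notation cost pi := (Re (\tr (pi *m costC R n))).
Implicit Types (P Q : 'M[C]_n) (pi : 'M[C]_N).

Definition mxvec_unindex (x : 'I_N) : 'I_n * 'I_n :=
  enum_val (cast_ord (esym (mxvec_cast n n)) x).

Lemma mxvec_indexK i j : mxvec_unindex (mv i j) = (i, j).
Proof. by rewrite /mxvec_unindex /mxvec_index cast_ordK enum_rankK. Qed.

Lemma big_mxvec_index (F : 'I_N -> C) : \sum_x F x = \sum_i \sum_j F (mv i j).
Proof. by rewrite pair_bigA (reindex _ (curry_mxvec_bij n n)); apply: eq_bigr => -[]. Qed.

Lemma mxtrace_mxvec (A : 'M[C]_N) : \tr A = \sum_i \sum_j A (mv i j) (mv i j).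
Proof. exact: big_mxvec_index. Qed.

Lemma mxtrace_costC pi :
  \tr (pi *m costC R n) = 2^-1 * (\tr pi - \sum_i \sum_j pi (mv i j) (mv j i)).
Proof.
rewrite /costC -scalemxAr mxtraceZ mulmxBr mulmx1 linearB /=; congr (_ * (_ - _)).
rewrite /SWAP mulmx_sumr linear_sum /=; apply: eq_bigr => i _.
by rewrite mulmx_sumr linear_sum /=; apply: eq_bigr => j _; rewrite mxtrace_mul_delta.
Qed.

Definition asym i j : 'cV[C]_N := e (mv i j) - e (mv j i).

Lemma mxform_asym pi i j : mxform pi (asym i j) (asym i j) =
  pi (mv i j) (mv i j) - pi (mv i j) (mv j i) - pi (mv j i) (mv i j) + pi (mv j i) (mv j i).
Proof. by rewrite /asym mxformBl !mxformBr !mxform_delta; ring. Qed.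

Lemma sum_mxform_asym pi :
  \sum_i \sum_j mxform pi (asym i j) (asym i j) = \tr (pi *m costC R n) *+ 4.
Proof.
have -> : \tr (pi *m costC R n) *+ 4 =
    (\tr pi - \sum_i \sum_j pi (mv i j) (mv j i)) *+ 2.
  by rewrite mxtrace_costC -mulr_natl -[RHS]mulr_natl; field.
under eq_bigr do under eq_bigr do rewrite mxform_asym.
rewrite !mxtrace_mxvec; under eq_bigr do rewrite big_split /= !sumrB.
rewrite big_split /= !sumrB.
rewrite [X in _ - X + _]exchange_big [X in _ + X]exchange_big /=.
by rewrite mulr2n; ring.
Qed.

Lemma Re_sum_mxform_asym pi :
  \sum_i \sum_j Re (mxform pi (asym i j) (asym i j)) = cost pi *+ 4.
Proof.
by rewrite -raddfMn -sum_mxform_asym raddf_sum; under [RHS]eq_bigr do rewrite raddf_sum.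
Qed.

Lemma cost_ge0 pi : psdmx pi -> 0 <= cost pi.
Proof.
move=> psd; rewrite -(pmulrn_lge0 _ (isT : (0 < 4)%N)) -Re_sum_mxform_asym.
by do 2![apply: sumr_ge0 => ? _]; apply: psdmx_Re_ge0.
Qed.

Lemma mxform_asym_le_cost pi a k : psdmx pi ->
  Re (mxform pi (asym a k) (asym a k)) <= cost pi *+ 4.
Proof.
move=> psd; rewrite -Re_sum_mxform_asym.
have form_ge0 i j : 0 <= Re (mxform pi (asym i j) (asym i j)) by apply: psdmx_Re_ge0.
apply: le_trans (ler_term_sum a _); last by move=> i; apply: sumr_ge0.
exact: ler_term_sum.
Qed.

(* Writing [e_ak = e_ka + asym a k], the k-th summand [pi(ak,bk) - pi(ka,kb)] of
   [(P - Q) a b] splits into three matrix elements of [pi], each involving an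
   antisymmetric vector. *)
Lemma couplings_subE P Q pi a b : couplings P Q pi ->
  (P - Q) a b = \sum_k (mxform pi (asym a k) (e (mv k b)) +
    mxform pi (e (mv k a)) (asym b k) + mxform pi (asym a k) (asym b k)).
Proof.
move=> [_ [<- <-]]; rewrite !mxE -sumrB; apply: eq_bigr => k _.
by rewrite /asym !mxformBl !mxformBr !mxform_delta; ring.
Qed.

Lemma density_term_bound pi a b k (l : C) (eta : R) :
  is_density pi -> l * Num.conj l = 1 -> 0 < eta <= 1 -> cost pi <= eta ^+ 2 ->
  - Re (l * (mxform pi (asym a k) (e (mv k b)) +
    mxform pi (e (mv k a)) (asym b k) + mxform pi (asym a k) (asym b k))) <= 8 * eta.
Proof.
move=> dpi l_unit /andP[eta_gt0 eta_le1] cost_le; have [herm [psd _]] := dpi.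
have eta2_gt0 : 0 < 2 * eta by rewrite mulr_gt0.
have asym_le i j : Re (mxform pi (asym i j) (asym i j)) <= (2 * eta) ^+ 2.
  apply: le_trans (mxform_asym_le_cost i j psd) _.
  by rewrite exprMn; lra.
have e_le x : Re (mxform pi (e x) (e x)) <= 1 ^+ 2.
  by rewrite mxform_delta expr1n density_diag_le1.
have h1 := psdmx_Re_form_ge herm psd l_unit eta2_gt0 ltr01 (asym_le a k) (e_le (mv k b)).
have h2 := psdmx_Re_form_ge herm psd l_unit ltr01 eta2_gt0 (e_le (mv k a)) (asym_le b k).
have h3 := psdmx_Re_form_ge herm psd l_unit eta2_gt0 eta2_gt0 (asym_le a k) (asym_le b k).
rewrite !mulrDr !raddfD /= ?opprD; apply: le_trans (lerD (lerD h1 h2) h3) _.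
have : eta * eta <= eta by rewrite ler_piMr // ltW.
by clear; lra.
Qed.

Lemma couplings_sub_bound P Q pi a b (l : C) (eta : R) :
  couplings P Q pi -> l * Num.conj l = 1 -> 0 < eta <= 1 -> cost pi <= eta ^+ 2 ->
  - Re (l * (P - Q) a b) <= 8 * n%:R * eta.
Proof.
move=> piPQ l_unit eta01 cost_le; have [dpi _] := piPQ.
rewrite (couplings_subE a b piPQ) mulr_sumr raddf_sum -sumrN.
have -> : 8 * n%:R * eta = \sum_(k < n) 8 * eta.
  by rewrite sumr_const card_ord -mulr_natr; ring.
by apply: ler_sum => k _; apply: density_term_bound.
Qed.

Definition swap_index (x : 'I_N) : 'I_N :=
  mv (mxvec_unindex x).2 (mxvec_unindex x).1.

Lemma swap_indexE i j : swap_index (mv i j) = mv j i.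
Proof. by rewrite /swap_index mxvec_indexK. Qed.

Lemma swap_indexK : involutive swap_index.
Proof. by move=> x; case/mxvec_indexP: x => i j; rewrite !swap_indexE. Qed.

Lemma swap_index_inj : injective swap_index.
Proof. exact: inv_inj swap_indexK. Qed.

(* [swapmx pi] is [SWAP *m pi *m SWAP]. *)
Definition swapmx (pi : 'M[C]_N) : 'M[C]_N :=
  \matrix_(x, y) pi (swap_index x) (swap_index y).

Lemma mxtrace_swapmx pi : \tr (swapmx pi) = \tr pi.
Proof.
by rewrite /mxtrace [RHS](reindex_inj swap_index_inj); apply: eq_bigr => x _; rewrite mxE.
Qed.

Lemma swapmx_cost pi : cost (swapmx pi) = cost pi.
Proof.
rewrite !mxtrace_costC mxtrace_swapmx exchange_big /=.
by congr (Re (_ * (_ - _))); do 2![apply: eq_bigr => ? _]; rewrite mxE !swap_indexE.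
Qed.

Lemma swapmx_couplings P Q pi : couplings P Q pi -> couplings Q P (swapmx pi).
Proof.
move=> [[herm [psd tr1]] [<- <-]].
split; [split; [|split] | split].
- by apply/matrixP => x y; rewrite adjmxE !mxE -adjmxE herm.
- move=> v; have := psd (\col_x v (swap_index x) 0); rewrite /mxform.
  rewrite -/(mxform _ _ _) -/(mxform _ _ _) !mxform_sum (reindex_inj swap_index_inj).
  under [in X in _ -> X]eq_bigr do rewrite (reindex_inj swap_index_inj).
  by congr (_ <= _); do 2![apply: eq_bigr => ? _]; rewrite !mxE !swap_indexK.
- by rewrite mxtrace_swapmx.
- by apply/matrixP => i k; rewrite !mxE; apply: eq_bigr => j _; rewrite mxE !swap_indexE.
- by apply/matrixP => i k; rewrite !mxE; apply: eq_bigr => j _; rewrite mxE !swap_indexE.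
Qed.

Lemma mxtrace_ptrY (pi : 'M[C]_N) : \tr (ptrY pi) = \tr pi.
Proof. by rewrite mxtrace_mxvec /mxtrace; apply: eq_bigr => i _; rewrite mxE. Qed.

Definition tensmx (P Q : 'M[C]_n) : 'M[C]_N :=
  \matrix_(x, y) (P (mxvec_unindex x).1 (mxvec_unindex y).1 *
                  Q (mxvec_unindex x).2 (mxvec_unindex y).2).

Lemma tensmxE P Q i j k l : tensmx P Q (mv i j) (mv k l) = P i k * Q j l.
Proof. by rewrite mxE !mxvec_indexK. Qed.

Definition tensv (x y : 'cV[C]_n) : 'cV[C]_N :=
  \col_z (x (mxvec_unindex z).1 0 * y (mxvec_unindex z).2 0).

Lemma tensvE x y i j : tensv x y (mv i j) 0 = x i 0 * y j 0.
Proof. by rewrite mxE mxvec_indexK. Qed.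

Section GramTensor.
Variables (I : finType) (c : I -> C) (x y : I -> 'cV[C]_n).
Let pi := gram c (fun r => tensv (x r) (y r)).

Lemma gram_tensvE i j k l :
  pi (mv i j) (mv k l) = \sum_r c r * (x r i 0 * y r j 0 * Num.conj (x r k 0 * y r l 0)).
Proof. by rewrite gramE; apply: eq_bigr => r _; rewrite !tensvE. Qed.

Lemma ptrY_gram_tensv : (forall r, \sum_j y r j 0 * Num.conj (y r j 0) = 1) ->
  ptrY pi = gram c x.
Proof.
move=> y_unit; apply/matrixP => i k; rewrite gramE mxE.
under eq_bigr do rewrite gram_tensvE; rewrite exchange_big /=.
apply: eq_bigr => r _; rewrite -[RHS]mulr1 -(y_unit r) !mulr_sumr.
by apply: eq_bigr => j _; rewrite rmorphM; ring.
Qed.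

Lemma ptrX_gram_tensv : (forall r, \sum_j x r j 0 * Num.conj (x r j 0) = 1) ->
  ptrX pi = gram c y.
Proof.
move=> x_unit; apply/matrixP => i k; rewrite gramE mxE.
under eq_bigr do rewrite gram_tensvE; rewrite exchange_big /=.
apply: eq_bigr => r _; rewrite -[RHS]mulr1 -(x_unit r) !mulr_sumr.
by apply: eq_bigr => j _; rewrite rmorphM; ring.
Qed.

End GramTensor.

Lemma tensmx_couplings P Q : is_density P -> is_density Q -> couplings P Q (tensmx P Q).
Proof.
move=> dP dQ; have [hermP [psdP trP]] := dP; have [hermQ [psdQ trQ]] := dQ.
have [cP [wP [cP_ge0 defP _]]] := herm_psd_gram hermP psdP.
have [cQ [wQ [cQ_ge0 defQ _]]] := herm_psd_gram hermQ psdQ.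
have c_ge0 (r : 'I_n * 'I_n) : 0 <= cP r.1 * cQ r.2 by rewrite mulr_ge0.
have PQ_gram : tensmx P Q =
    gram (fun r => cP r.1 * cQ r.2) (fun r => tensv (wP r.1) (wQ r.2)).
  apply/matrixP => x y; case/mxvec_indexP: x => i j; case/mxvec_indexP: y => k l.
  rewrite tensmxE gram_tensvE defP defQ !gramE big_distrlr pair_bigA /=.
  by apply: eq_bigr => -[r1 r2] _ /=; rewrite rmorphM; ring.
split; [split; [|split] | split].
- by rewrite PQ_gram gram_adj.
- by rewrite PQ_gram; apply: gram_psd.
- rewrite mxtrace_mxvec; under eq_bigr do under eq_bigr do rewrite tensmxE.
  by rewrite -big_distrlr /= -!/(mxtrace _) trP trQ mulr1.
- apply/matrixP => i k; rewrite mxE; under eq_bigr do rewrite tensmxE.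
  by rewrite -mulr_sumr -/(mxtrace _) trQ mulr1.
- apply/matrixP => i k; rewrite mxE; under eq_bigr do rewrite tensmxE.
  by rewrite -mulr_suml -/(mxtrace _) trP mul1r.
Qed.

Lemma self_coupling_cost0 P : is_density P -> exists2 pi, couplings P P pi & cost pi = 0.
Proof.
move=> [herm [psd trP]]; have [c [w [c_ge0 defP w_unit]]] := herm_psd_gram herm psd.
pose pi := gram c (fun m => tensv (w m) (w m)).
have piY : ptrY pi = P by rewrite ptrY_gram_tensv // defP.
exists pi; first split.
- by split; [exact: gram_adj | split; [exact: gram_psd | rewrite -mxtrace_ptrY piY]].
- by split; last by rewrite ptrX_gram_tensv // defP.
rewrite mxtrace_costC; have -> : \sum_i \sum_j pi (mv i j) (mv j i) = \tr pi.
  rewrite mxtrace_mxvec; do 2![apply: eq_bigr => ? _]; rewrite !gram_tensvE.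
  by apply: eq_bigr => m _; rewrite !rmorphM; ring.
by rewrite subrr mulr0.
Qed.

Local Open Scope classical_set_scope.
Local Notation costs P Q := [set cost pi | pi in couplings P Q].

Lemma costs_lbound P Q : lbound (costs P Q) 0.
Proof. by move=> _ [pi [[_ [psd _]] _] <-]; apply: cost_ge0. Qed.

Lemma costs_neq0 P Q : is_density P -> is_density Q -> costs P Q !=set0.
Proof.
by move=> dP dQ; exists (cost (tensmx P Q)), (tensmx P Q); first exact: tensmx_couplings.
Qed.

Lemma qW_ge0 P Q : is_density P -> is_density Q -> 0 <= qW P Q.
Proof. by move=> dP dQ; apply: lb_le_inf (costs_neq0 dP dQ) (@costs_lbound P Q). Qed.

Lemma qWC P Q : qW P Q = qW Q P.
Proof.
rewrite /qW; congr inf.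
apply/seteqP; split => _ [pi /swapmx_couplings piPQ <-].
  by exists (swapmx pi); rewrite ?swapmx_cost.
by exists (swapmx pi); rewrite ?swapmx_cost.
Qed.

Lemma qWxx P : is_density P -> qW P P = 0.
Proof.
move=> dP; apply/le_anti; rewrite qW_ge0 // andbT.
have [pi piPP <-] := self_coupling_cost0 dP.
by apply: ge_inf; [exists 0; apply: costs_lbound | exists pi].
Qed.

Lemma qW_eq0 P Q : is_density P -> is_density Q -> qW P Q = 0 -> P = Q.
Proof.
move=> dP dQ qW0; apply/matrixP => a b.
suff : (P - Q) a b = 0 by rewrite !mxE => /eqP; rewrite subr_eq0 => /eqP.
apply: complex_eq0_of_Re_ge0 => l l_unit; rewrite -oppr_le0.
apply: (@le0_of_le_linear _ _ (8 * n%:R)) => [|eta eta01]; first by rewrite mulr_ge0.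
have qW_lt : qW P Q < eta ^+ 2 by rewrite qW0 exprn_gt0 //; case/andP: eta01.
have [_ [pi piPQ <-] cost_lt] := inf_lt (costs_neq0 dP dQ) qW_lt.
exact: couplings_sub_bound piPQ l_unit eta01 (ltW cost_lt).
Qed.

End QuantumWasserstein.

Theorem theorem1 (R : realType) (n : nat) (P Q : 'M[complex R]_n) :
  is_density P -> is_density Q ->
  [/\ 0 <= qW P Q,
      qW P Q = qW Q P &
      (qW P Q = 0 <-> P = Q)].
Proof.
move=> dP dQ; split; [exact: qW_ge0 | exact: qWC | split; first exact: qW_eq0].
by move=> <-; apply: qWxx.
Qed.
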